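(* Let $M$ be a monoid that embeds into a group $G$ (identify $M$ with its image in $G$). Suppose that $\mathbb Z^{+}[M]$ has nonzero common right multiples. Then for any $a,b\in M$ there exist $k\ge 1$ and signs $\epsilon_1,\delta_1,\ldots,\epsilon_k,\delta_k\in\{1,-1\}$ such that $a^{\epsilon_1}b^{\delta_1}a^{\epsilon_2}b^{\delta_2}\cdots a^{\epsilon_k}b^{\delta_k}=1$ holds in $G$.
   Context: For a monoid $M$, $\mathbb Z^{+}[M]$ denotes the set of elements of the monoid ring $\mathbb Z[M]$ that are linear combinations of elements of $M$ with positive integer coefficients, together with $0$; it is closed under multiplication. We say $\mathbb Z^{+}[M]$ has nonzero common right multiples (satisfies the Ore condition) if for any $p,q\in\mathbb Z^{+}[M]$ there exist $u,v\in\mathbb Z^{+}[M]$, not both zero, with $pu=qv$. *)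

From Stdlib Require Import List Permutation.
Import ListNotations.

Record is_monoid (M : Type) (mul : M -> M -> M) (e : M) : Prop := {
  mon_assoc : forall x y z, mul x (mul y z) = mul (mul x y) z;
  mon_unit_l : forall x, mul e x = x;
  mon_unit_r : forall x, mul x e = x }.

Record is_group (G : Type) (mul : G -> G -> G) (inv : G -> G) (e : G) : Prop := {
  grp_assoc : forall x y z, mul x (mul y z) = mul (mul x y) z;
  grp_unit_l : forall x, mul e x = x;
  grp_unit_r : forall x, mul x e = x;
  grp_inv_l : forall x, mul (inv x) x = e;
  grp_inv_r : forall x, mul x (inv x) = e }.

Definition monoid_embedding {M G : Type} (mulM : M -> M -> M) (eM : M)
    (mulG : G -> G -> G) (eG : G) (f : M -> G) : Prop :=
  (forall x y, f x = f y -> x = y) /\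
  (forall x y, f (mulM x y) = mulG (f x) (f y)) /\
  f eM = eG.

(* Z^+[M]: an element sum_i n_i m_i (n_i positive integers) or 0 is represented
   as a finite formal sum, i.e. a list of elements of M (with repetitions);
   two lists represent the same element iff they are permutations of each
   other; the empty list is 0. *)
Definition zplus (M : Type) := list M.

Definition zplus_eq {M : Type} (p q : zplus M) : Prop := Permutation p q.

Definition zplus_mul {M : Type} (mul : M -> M -> M) (p q : zplus M) : zplus M :=
  flat_map (fun x => map (fun y => mul x y) q) p.

Definition zplus_right_ore {M : Type} (mul : M -> M -> M) : Prop :=
  forall p q : zplus M, exists u v : zplus M,
    (u <> [] \/ v <> []) /\ zplus_eq (zplus_mul mul p u) (zplus_mul mul q v).

Definition sgpow {G : Type} (inv : G -> G) (s : bool) (x : G) : G :=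
  if s then x else inv x.

(* a^{e1} b^{d1} ... a^{ek} b^{dk} for the list [(e1,d1); ...; (ek,dk)] *)
Definition alt_word {G : Type} (mul : G -> G -> G) (inv : G -> G) (e : G)
    (a b : G) (signs : list (bool * bool)) : G :=
  fold_right (fun sd acc => mul (mul (sgpow inv (fst sd) a) (sgpow inv (snd sd) b)) acc)
    e signs.

From Stdlib Require Import List.
From Stdlib Require Import Permutation Lia.
Import ListNotations.

(* Apply the Ore condition to p = 1 + a and q = 1 + b:
   there are u, v, not both zero, with (1 + a) u = (1 + b) v in Z^+[M].
   Mapping into G, the lists U ++ aU and V ++ bV (U = f(u), V = f(v)) are
   permutations of each other, so they have the same finite, nonempty
   support S.  Every z in S can be written z = a^{+-1} y with y in S (as
   z lies in U or in aU), and likewise z = b^{+-1} y with y in S.  Hence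
   every z in S "reaches" some w in S, i.e. z = W w for a nonempty
   alternating word W = a^{e_1} b^{d_1} ... a^{e_k} b^{d_k}.  Reachability
   is transitive, and a transitive relation that is total on a finite
   nonempty list has a loop (a pigeonhole argument): z = W z, so W = 1. *)

Lemma transitive_total_has_loop {X : Type} (R : X -> X -> Prop)
    (R_trans : forall x y z, R x y -> R y z -> R x z) :
  forall S : list X, S <> [] -> (forall z, In z S -> exists y, In y S /\ R z y) ->
  exists z, In z S /\ R z z.
Proof.
  induction S as [|h T IH]; intros S_nonempty S_total; [congruence|].
  destruct (S_total h (or_introl eq_refl)) as [y0 [[<- | y0_in_T] Rhy0]].
  { exists h; split; [left|]; auto. }
  (* Remove h: every successor h of an element of T is replaced by y0. *)
  assert (T_total : forall z, In z T -> exists y, In y T /\ R z y).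
  { intros z z_in_T.
    destruct (S_total z (or_intror z_in_T)) as [y [[<- | y_in_T] Rzy]].
    - exists y0; split; [assumption | eapply R_trans; eassumption].
    - exists y; split; assumption. }
  destruct (IH ltac:(destruct T; [contradiction | discriminate]) T_total)
    as [z [z_in_T Rzz]].
  exists z; split; [right|]; assumption.
Qed.

Section AlternatingWords.
Variables (G : Type) (mul : G -> G -> G) (inv : G -> G) (e : G).
Hypothesis HG : is_group G mul inv e.

Let assoc := grp_assoc _ _ _ _ HG.
Let unit_l := grp_unit_l _ _ _ _ HG.
Let unit_r := grp_unit_r _ _ _ _ HG.
Let inv_l := grp_inv_l _ _ _ _ HG.
Let inv_r := grp_inv_r _ _ _ _ HG.

Lemma alt_word_app (A B : G) (s t : list (bool * bool)) :
  alt_word mul inv e A B (s ++ t)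
  = mul (alt_word mul inv e A B s) (alt_word mul inv e A B t).
Proof.
  induction s as [|st s IH]; simpl.
  - symmetry; apply unit_l.
  - rewrite IH; apply assoc.
Qed.

Lemma fixes_point_is_unit (W z : G) : mul W z = z -> W = e.
Proof.
  intros Wz.
  rewrite <- (unit_r W), <- (inv_r z) at 1.
  rewrite assoc, Wz.
  apply inv_r.
Qed.

Definition reaches (A B z y : G) : Prop :=
  exists s, 1 <= length s /\ z = mul (alt_word mul inv e A B s) y.

Lemma reaches_trans (A B x y z : G) :
  reaches A B x y -> reaches A B y z -> reaches A B x z.
Proof.
  intros [s [Hs ->]] [t [Ht ->]].
  exists (s ++ t); split.
  - rewrite length_app; lia.
  - rewrite alt_word_app; apply assoc.
Qed.

Lemma translate_within (A : G) (U : list G) (z : G) :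
  In z (U ++ map (mul A) U) ->
  exists s y, In y (U ++ map (mul A) U) /\ z = mul (sgpow inv s A) y.
Proof.
  intros z_in. apply in_app_or in z_in as [z_in_U | z_in_AU].
  - exists false, (mul A z); split.
    + apply in_or_app; right; apply in_map; assumption.
    + simpl; rewrite assoc, inv_l, unit_l; reflexivity.
  - apply in_map_iff in z_in_AU as [u [<- u_in_U]].
    exists true, u; split; [apply in_or_app; left|]; auto.
Qed.

Lemma same_support_gives_word (A B : G) (U V : list G) :
  U <> [] ->
  (forall z, In z (U ++ map (mul A) U) <-> In z (V ++ map (mul B) V)) ->
  exists s, 1 <= length s /\ alt_word mul inv e A B s = e.
Proof.
  intros U_nonempty same_support.
  set (S := U ++ map (mul A) U).
  assert (S_total : forall z, In z S -> exists w, In w S /\ reaches A B z w).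
  { intros z z_in.
    destruct (translate_within A U z z_in) as [s1 [y [y_in Ezy]]].
    apply same_support in y_in.
    destruct (translate_within B V y y_in) as [s2 [w [w_in Eyw]]].
    apply same_support in w_in.
    exists w; split; [assumption|].
    exists [(s1, s2)]; split; [simpl; lia|].
    simpl; rewrite unit_r, Ezy, Eyw; apply assoc. }
  destruct (transitive_total_has_loop (reaches A B) (reaches_trans A B) S
              ltac:(unfold S; destruct U; [congruence | discriminate]) S_total)
    as [z [_ [s [Hs Ez]]]].
  exists s; split; [assumption|].
  apply (fixes_point_is_unit _ z); symmetry; assumption.
Qed.

End AlternatingWords.

Lemma map_one_plus_mul {M G : Type} (mulM : M -> M -> M) (eM : M)
    (mulG : G -> G -> G) (eG : G) (f : M -> G)
    (f_mul : forall x y, f (mulM x y) = mulG (f x) (f y)) (f_unit : f eM = eG)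
    (unit_l : forall x, mulG eG x = x) (c : M) (w : zplus M) :
  map f (zplus_mul mulM [eM; c] w) = map f w ++ map (mulG (f c)) (map f w).
Proof.
  unfold zplus_mul; simpl.
  rewrite app_nil_r, map_app, !map_map.
  f_equal; apply map_ext; intros y; rewrite f_mul; [rewrite f_unit|]; auto.
Qed.

Theorem lemma1 (M : Type) (mulM : M -> M -> M) (eM : M)
  (G : Type) (mulG : G -> G -> G) (invG : G -> G) (eG : G) (f : M -> G)
  (HM : is_monoid M mulM eM) (HG : is_group G mulG invG eG)
  (Hf : monoid_embedding mulM eM mulG eG f)
  (Hore : zplus_right_ore mulM) :
  forall a b : M, exists signs : list (bool * bool),
    1 <= length signs /\ alt_word mulG invG eG (f a) (f b) signs = eG.
Proof.
  intros a b. destruct Hf as [_ [f_mul f_unit]].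
  destruct (Hore [eM; a] [eM; b]) as [u [v [nonzero Hperm]]].
  apply (Permutation_map f) in Hperm.
  rewrite !(map_one_plus_mul mulM eM mulG eG f f_mul f_unit (grp_unit_l _ _ _ _ HG))
    in Hperm.
  apply (same_support_gives_word G mulG invG eG HG (f a) (f b) (map f u) (map f v)).
  - (* u = 0 would force v = 0 by comparing sizes *)
    intros Hu. apply map_eq_nil in Hu; subst u.
    destruct nonzero as [|v_nonzero]; [congruence|].
    apply Permutation_length in Hperm; simpl in Hperm.
    rewrite length_app, !length_map in Hperm.
    destruct v; [congruence | simpl in Hperm; lia].
  - intros z; split; apply Permutation_in; [|apply Permutation_sym]; assumption.
Qed.
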